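(* Let $\mathbf{D}\in\mathbb{R}^{N\times N}$, $\mathbf{H}\in\mathbb{R}^{N\times L}$, $\mathbf{A}\in\mathbb{R}^{m\times N}$ with $m<N$, and consider the system $\mathbf{x}_k=\mathbf{D}\mathbf{x}_{k-1}+\mathbf{H}\mathbf{h}_k$, $\mathbf{y}_k=\mathbf{A}\mathbf{x}_k$, with unconstrained inputs $\mathbf{h}_k\in\mathbb{R}^L$. If the system is output controllable, then for all $\lambda\in\mathbb{C}$ the matrix $\mathbf{A}\begin{bmatrix}\lambda\mathbf{I}-\mathbf{D} & \mathbf{H}\end{bmatrix}\in\mathbb{C}^{m\times(N+L)}$ has rank $m$.
   Context: The system is output controllable if for every initial state $\mathbf{x}_0\in\mathbb{R}^N$ and every desired output $\mathbf{y}\in\mathbb{R}^m$ there exist a finite $K$ and inputs $\mathbf{h}_1,\dots,\mathbf{h}_K\in\mathbb{R}^L$ such that $\mathbf{y}_K=\mathbf{A}\mathbf{x}_K=\mathbf{y}$. *)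

(* Reals are modelled by an arbitrary real closed field R
   (the standard reals are an instance); complex numbers by R[i]. *)
From HB Require Import structures.
From mathcomp Require Import all_boot all_order all_algebra.
From mathcomp Require Export complex.
Set Implicit Arguments. Unset Strict Implicit. Unset Printing Implicit Defensive.
Import Order.TTheory GRing.Theory Num.Theory.
Local Open Scope ring_scope.

(* State trajectory of x_k = D x_{k-1} + H h_k, starting at x_0,
   driven by the input sequence h (only h 1, h 2, ... are used). *)
Fixpoint state (R : pzRingType) (N L : nat) (D : 'M[R]_N) (H : 'M[R]_(N, L))
  (x0 : 'cV[R]_N) (h : nat -> 'cV[R]_L) (k : nat) : 'cV[R]_N :=
  match k with
  | 0 => x0
  | k'.+1 => D *m state D H x0 h k' + H *m h k'.+1
  end.

Definition output_controllable (R : pzRingType) (m N L : nat)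
  (D : 'M[R]_N) (H : 'M[R]_(N, L)) (A : 'M[R]_(m, N)) : Prop :=
  forall (x0 : 'cV[R]_N) (y : 'cV[R]_m),
    exists (K : nat) (h : nat -> 'cV[R]_L), A *m state D H x0 h K = y.

(* A row vector w in the left kernel of A [lambda I - D, H] gives v := w A, a
   left eigenvector of D orthogonal to H, hence orthogonal to every state
   reachable from x_0 = 0.  By output controllability the outputs A x_K of
   these states exhaust R^m, so w vanishes on all real vectors and thus w = 0. *)
From HB Require Import structures.
From mathcomp Require Import all_boot all_order all_algebra.
From mathcomp Require Import complex.
Import Order.TTheory GRing.Theory Num.Theory.
Local Open Scope ring_scope.

Lemma map_state (R S : pzRingType) (f : {rmorphism R -> S}) (N L : nat)
    (D : 'M[R]_N) (H : 'M[R]_(N, L)) (x0 : 'cV[R]_N) (h : nat -> 'cV[R]_L)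
    (k : nat) :
  map_mx f (state D H x0 h k)
  = state (map_mx f D) (map_mx f H) (map_mx f x0) (fun i => map_mx f (h i)) k.
Proof. by elim: k => [|k IHk] //=; rewrite map_mxD !map_mxM IHk. Qed.

Lemma left_eigenvector_state0 (R : pzRingType) (N L : nat)
    (D : 'M[R]_N) (H : 'M[R]_(N, L)) (h : nat -> 'cV[R]_L)
    (v : 'rV[R]_N) (lambda : R) :
  v *m D = lambda *: v -> v *m H = 0 -> forall k, v *m state D H 0 h k = 0.
Proof.
move=> vD vH; elim=> [|k IHk] /=; first by rewrite mulmx0.
by rewrite mulmxDr !mulmxA vD vH mul0mx addr0 -scalemxAl IHk scaler0.
Qed.

Lemma row_eq0_on_map (R S : pzRingType) (f : {rmorphism R -> S}) (m : nat)
    (w : 'rV[S]_m) :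
  (forall y : 'cV[R]_m, w *m map_mx f y = 0) -> w = 0.
Proof.
move=> wf0; apply/rowP => j.
have := congr1 (fun X : 'M_1 => X 0 0) (wf0 (delta_mx j 0)).
by rewrite map_delta_mx -colE !mxE.
Qed.

Section LeftKernel.

Variables (R : pzRingType) (S : comPzRingType) (f : {rmorphism R -> S}).
Variables (m N L : nat) (D : 'M[R]_N) (H : 'M[R]_(N, L)) (A : 'M[R]_(m, N)).
Hypothesis ocDHA : output_controllable D H A.

Lemma output_controllable_left_kernel (w : 'rV[S]_m) (lambda : S) :
  w *m (map_mx f A *m row_mx (lambda%:M - map_mx f D) (map_mx f H)) = 0 ->
  w = 0.
Proof.
rewrite mulmxA mul_mx_row -row_mx0 => /eq_row_mx[wAD wAH].
set v := w *m map_mx f A in wAD wAH.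
have vD : v *m map_mx f D = lambda *: v.
  by apply/eqP; rewrite eq_sym -subr_eq0 -mul_mx_scalar -mulmxBr wAD.
apply: (@row_eq0_on_map R S f m w) => y.
have [K [h <-]] := ocDHA 0 y.
rewrite map_mxM mulmxA map_state map_mx0.
exact: left_eigenvector_state0 vD wAH K.
Qed.

End LeftKernel.

Theorem proposition1 (R : rcfType) (m N L : nat)
  (D : 'M[R]_N) (H : 'M[R]_(N, L)) (A : 'M[R]_(m, N)) :
  (m < N)%N ->
  output_controllable D H A ->
  forall lambda : R[i],
    \rank (map_mx (real_complex R) A
           *m row_mx (lambda%:M - map_mx (real_complex R) D)
                     (map_mx (real_complex R) H)) = m.
Proof.
move=> _ ocDHA lambda; apply/eqP; apply: inj_row_free => w.
exact: output_controllable_left_kernel.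
Qed.
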